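(* Let $\pi$ be a stationary deterministic memoryless policy, $\hat q:\mathcal{S}\times\mathcal{A}\to\mathbb{R}$ any function, $\omega>0$ and $\mathcal{S}_{\text{fix}}\subseteq\mathcal{S}$. Let $\pi'=\pi_{\hat q,\pi,\mathcal{S}_{\text{fix}}}$ be the CAPI update. Assume that $|\hat q(s,a)-q^\pi(s,a)|\le\omega$ for all $s\in\mathcal{S}\setminus\mathcal{S}_{\text{fix}}$ and all $a\in\mathcal{A}$. Then $v^{\pi'}(s)\ge v^\pi(s)$ for every $s\in\mathcal{S}$.
   Context: An MDP is $M=(\mathcal{S},\mathcal{A},\mathcal{Q})$ with measurable state space $\mathcal{S}$, finite action set $\mathcal{A}=(\mathcal{A}_1,\dots,\mathcal{A}_{|\mathcal{A}|})$ (with a fixed ordering), and transition-reward kernel $\mathcal{Q}:\mathcal{S}\times\mathcal{A}\to\mathcal{M}_1(\mathcal{S}\times[0,1])$ with marginals $P(\cdot|s,a)$ (next state) and $\mathcal{R}(\cdot|s,a)$ (reward), $r(s,a)$ the mean reward; discount factor $\gamma\in(0,1)$. For a stationary memoryless policy $\pi$, $v^\pi(s)=\mathbb{E}_{\pi,s}[\sum_{t\ge0}\gamma^tR_t]$ and $q^\pi(s,a)=\mathbb{E}_{\pi,s,a}[\sum_{t\ge0}\gamma^tR_t]$ (trajectory started at $s$, resp. with first action $a$, then following $\pi$). For a deterministic policy, $\pi(s)$ denotes the chosen action. CAPI update: given $\hat q$, a deterministic policy $\pi$, $\omega>0$ and $\mathcal{S}_{\text{fix}}\subseteq\mathcal{S}$,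 the deterministic policy $\pi_{\hat q,\pi,\mathcal{S}_{\text{fix}}}$ is defined by $\pi_{\hat q,\pi,\mathcal{S}_{\text{fix}}}(s)=\arg\max_{a\in\mathcal{A}}\hat q(s,a)$ if $s\notin\mathcal{S}_{\text{fix}}$ and $\hat q(s,\pi(s))+\omega<\max_{a}\hat q(s,a)-\omega$, and $=\pi(s)$ otherwise; the argmax breaks ties by choosing the action $\mathcal{A}_i$ with the smallest index $i$. *)

From HB Require Import structures.
From mathcomp Require Import all_boot all_order all_algebra.
From mathcomp Require Import all_classical all_reals all_analysis.
Set Implicit Arguments.
Unset Strict Implicit.
Unset Printing Implicit Defensive.
Import Order.TTheory GRing.Theory Num.Theory.
Local Open Scope classical_set_scope.
Local Open Scope ring_scope.

(* An MDP with measurable state space T, finite ordered action set 'I_m.+1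
   (action A_i is the ordinal i, ordering = index order), and
   transition-reward kernel Q : S x A -> M_1(S x R) given, for each action a,
   as a probability kernel Q a : T ~> T * R (measurable in the state). *)

Section MDP.
Context {d : measure_display} {T : measurableType d} {R : realType} {m : nat}.
Variable Q : 'I_m.+1 -> R.-pker T ~> (T * R)%type.

Definition mean_reward (s : T) (a : 'I_m.+1) : \bar R :=
  (\int[Q a s]_z (z.2)%:E)%E.

Definition next_int (s : T) (a : 'I_m.+1) (f : T -> \bar R) : \bar R :=
  (\int[Q a s]_z f z.1)%E.

(* expected reward at time t, E_{pi,s}[R_t] = (P_pi^t r_pi)(s),
   for a deterministic memoryless policy pi *)
Fixpoint exp_reward (pi : T -> 'I_m.+1) (t : nat) (s : T) : \bar R :=
  match t with
  | 0 => mean_reward s (pi s)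
  | t'.+1 => next_int s (pi s) (exp_reward pi t')
  end.

Definition exp_reward_q (pi : T -> 'I_m.+1) (t : nat) (s : T) (a : 'I_m.+1)
  : \bar R :=
  match t with
  | 0 => mean_reward s a
  | t'.+1 => next_int s a (exp_reward pi t')
  end.

(* v^pi(s) = E_{pi,s}[sum_t gamma^t R_t] = sum_t gamma^t E_{pi,s}[R_t] *)
Definition vpi (gamma : R) (pi : T -> 'I_m.+1) (s : T) : \bar R :=
  (\sum_(0 <= t <oo) ((gamma ^+ t)%:E * exp_reward pi t s))%E.

Definition qpi (gamma : R) (pi : T -> 'I_m.+1) (s : T) (a : 'I_m.+1) : \bar R :=
  (\sum_(0 <= t <oo) ((gamma ^+ t)%:E * exp_reward_q pi t s a))%E.

End MDP.

Section CAPI.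
Context {T : Type} {R : realType} {m : nat}.

Definition qmax (qhat : T -> 'I_m.+1 -> R) (s : T) : R :=
  \big[Num.max/qhat s ord0]_(a < m.+1) qhat s a.

(* argmax_a qhat(s,a), ties broken by the smallest index *)
Definition greedy (qhat : T -> 'I_m.+1 -> R) (s : T) : 'I_m.+1 :=
  odflt ord0 [pick i : 'I_m.+1 | (qhat s i == qmax qhat s)
                  && [forall j : 'I_m.+1, (j < i)%N ==> (qhat s j != qmax qhat s)]].

Definition capi (qhat : T -> 'I_m.+1 -> R) (pi : T -> 'I_m.+1) (omega : R)
  (Sfix : set T) (s : T) : 'I_m.+1 :=
  if `[< ~ Sfix s >] && (qhat s (pi s) + omega < qmax qhat s - omega)
  then greedy qhat s else pi s.

End CAPI.

(* Outside [Sfix], CAPI leaves [pi s] for the greedy action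
   of [qhat] only when [qhat] ranks it more than [2 omega] higher; as [qhat] is
   [omega]-close to [q^pi] there, [q^pi s (pi s) <= q^pi s (pi' s)] for all [s].
   With [v^pi s = q^pi s (pi s)] and the Bellman equation
   [q^pi s a = r s a + gamma (P_a v^pi) s], this says that [v^pi] is a
   subsolution of the Bellman equation of [pi']:
   [v^pi <= r_pi' + gamma P_pi' v^pi].  Unrolling it [n] times bounds [v^pi] by
   the first [n] discounted expected rewards under [pi'] plus
   [gamma^n / (1 - gamma)] (rewards lie in [0,1]), and letting [n] go to
   infinity gives [v^pi <= v^pi'].  The integrals involved are meaningful
   because [pi'] is measurable as soon as [pi], [qhat] and [Sfix] are. *)

From HB Require Import structures.
From mathcomp Require Import all_boot all_order all_algebra.
From mathcomp Require Import all_classical all_reals all_analysis.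
From mathcomp Require Import measurable_realfun lra.
Import Order.TTheory GRing.Theory Num.Theory.
Local Open Scope classical_set_scope.
Local Open Scope ring_scope.
Set Implicit Arguments.
Unset Strict Implicit.

Section finite_valued_measurability.
Context {d : measure_display} {T : measurableType d} {I : finType}.

Definition measurable_policy (f : T -> I) := forall i, measurable (f @^-1` [set i]).

Lemma measurable_policyP (f : T -> I) :
  measurable_policy f <-> forall i, measurable_fun setT (fun s => f s == i).
Proof.
have preimE i : (fun s => f s == i) @^-1` [set true] = f @^-1` [set i].
  by apply/seteqP; split => s /= /eqP.
split=> mf i.
  by apply: (measurable_fun_bool true); rewrite setTI preimE.
by rewrite -preimE -[_ @^-1` _]setTI; exact: mf.
Qed.

Lemma measurable_fun_select d' (U : measurableType d') (f : T -> I)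
    (F : I -> T -> U) :
  measurable_policy f -> (forall i, measurable_fun setT (F i)) ->
  measurable_fun setT (fun s => F (f s) s).
Proof.
move=> mf mF _ B mB; rewrite setTI.
have -> : (fun s => F (f s) s) @^-1` B =
    \bigcup_(i in [set: I]) (f @^-1` [set i] `&` F i @^-1` B).
  apply/seteqP; split => [s Bs|s [i _ [/= -> //]]].
  by exists (f s) => //; split.
apply: fin_bigcup_measurable => [|i _]; first exact: finite_finset.
by apply: measurableI; [exact: mf|rewrite -[_ @^-1` _]setTI; exact: mF].
Qed.

Lemma measurable_fun_forall (P : I -> T -> bool) :
  (forall i, measurable_fun setT (P i)) ->
  measurable_fun setT (fun s => [forall i, P i s]).
Proof.
move=> mP; have -> : (fun s => [forall i, P i s]) =
    (fun s => all (fun i => P i s) (enum I)).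
  apply/funext => s; apply/forallP/allP => [h i _|h i]; first exact: h.
  by apply: h; rewrite mem_enum.
elim: (enum I) => [|i r IH] /=; first exact: measurable_cst.
exact: measurable_and.
Qed.

End finite_valued_measurability.

Lemma measurable_fun_bigmax d (T : measurableType d) (R : realType) (I : Type)
    (r : seq I) (f0 : T -> R) (F : I -> T -> R) :
  measurable_fun setT f0 -> (forall i, measurable_fun setT (F i)) ->
  measurable_fun setT (fun s => \big[Num.max/f0 s]_(i <- r) F i s).
Proof.
move=> mf0 mF; elim: r => [|i r IH].
  by under eq_fun do rewrite big_nil.
by under eq_fun do rewrite big_cons; exact: measurable_maxr.
Qed.

Lemma measurable_fst_comp d d' d'' (X : measurableType d) (Y : measurableType d')
    (Z : measurableType d'') (f : X -> Z) :
  measurable_fun setT f -> measurable_fun setT (fun z : X * Y => f z.1).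
Proof. by move=> mf; exact: measurableT_comp mf measurable_fst. Qed.

Section probability_kernel.
Context {d d' : measure_display} {X : measurableType d} {Y : measurableType d'}.
Context {R : realType} (k : R.-pker X ~> Y).
Local Open Scope ereal_scope.

Lemma prob_kernel_setC x (A : set Y) : measurable A -> k x (~` A) = 1 - k x A.
Proof.
move=> mA; have : k x (A `|` ~` A) = k x A + k x (~` A).
  by apply: measureU => //; [exact: measurableC|exact: setICr].
rewrite setUv prob_kernel.
case: (k x A) => [a| |]; case: (k x (~` A)) => [b| |] //=.
by move/(congr1 fine) => /= ->; rewrite -EFinD addrAC subrr add0r.
Qed.

Lemma prob_kernel_integral_le x (f : Y -> \bar R) (c : R) :
  measurable_fun setT f -> (forall y, 0 <= f y) -> (forall y, f y <= c%:E) ->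
  \int[k x]_y f y <= c%:E.
Proof.
move=> mf f0 fc; apply: (@le_trans _ _ (\int[k x]_y (cst c%:E) y)).
  by apply: ge0_le_integral => //; exact: measurable_cst.
by rewrite integral_cst // (@prob_kernel _ _ _ _ _ k) mule1.
Qed.

End probability_kernel.

Section bounded_rewards.
Context {d : measure_display} {T : measurableType d} {R : realType} {m : nat}.
Variable Q : 'I_m.+1 -> R.-pker T ~> (T * R)%type.
Hypothesis reward01 : forall a s, Q a s [set z | 0 <= z.2 <= 1] = 1%E.
Local Open Scope ereal_scope.

Let measurable_reward01 : measurable [set z : T * R | 0 <= z.2 <= 1]%R.
Proof.
have -> : [set z : T * R | 0 <= z.2 <= 1]%R =
    setT `&` snd @^-1` [set` (`[0%R, 1%R] : interval R)].
  by apply/seteqP; split => z /=; rewrite in_itv //= => -[].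
by apply: measurable_snd => //; exact: measurable_itv.
Qed.

(* Rewards lie in [0,1] only almost surely, so [mean_reward] is rewritten as
   the integral of the clamped reward, which is nonnegative everywhere. *)
Let clamped_reward (z : T * R) : \bar R := (Num.min (Num.max z.2 0) 1)%:E.

Let measurable_clamped_reward : measurable_fun setT clamped_reward.
Proof.
apply: measurableT_comp => //.
by apply: measurable_minr => //; apply: measurable_maxr => //; exact: measurable_snd.
Qed.

Let clamped_reward_ge0 z : 0 <= clamped_reward z.
Proof. by rewrite lee_fin le_min ler01 le_max lexx orbT. Qed.

Let clamped_reward_le1 z : clamped_reward z <= 1.
Proof. by rewrite lee_fin ge_min lexx orbT. Qed.

Let mean_rewardE a s : mean_reward Q s a = \int[Q a s]_z clamped_reward z.
Proof.
apply: ae_eq_integral => //.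
- by apply: measurableT_comp => //; exact: measurable_snd.
exists (~` [set z : T * R | 0 <= z.2 <= 1]%R); split.
- exact: measurableC.
- by rewrite prob_kernel_setC // reward01 subee.
move=> z /= + /andP[z0 z1]; apply.
by rewrite /clamped_reward max_l // min_l.
Qed.

Lemma measurable_mean_reward a : measurable_fun setT (fun s => mean_reward Q s a).
Proof.
under eq_fun do rewrite mean_rewardE.
by apply: (measurable_fun_integral_kernel (l := Q a)) => //; exact: measurable_kernel.
Qed.

Lemma mean_reward_ge0 s a : 0 <= mean_reward Q s a.
Proof. by rewrite mean_rewardE; apply: integral_ge0. Qed.

Lemma mean_reward_le1 s a : mean_reward Q s a <= 1.
Proof. by rewrite mean_rewardE; exact: prob_kernel_integral_le. Qed.

Section next_int.
Variables (a : 'I_m.+1) (f : T -> \bar R).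
Hypotheses (mf : measurable_fun setT f) (f0 : forall x, 0 <= f x).

Lemma measurable_next_int : measurable_fun setT (fun s => next_int Q s a f).
Proof.
apply: (measurable_fun_integral_kernel (l := Q a)) => //.
  exact: measurable_kernel.
exact: measurable_fst_comp.
Qed.

Lemma next_int_ge0 s : 0 <= next_int Q s a f.
Proof. by apply: integral_ge0. Qed.

Lemma next_int_le s (c : R) : (forall x, f x <= c%:E) -> next_int Q s a f <= c%:E.
Proof.
by move=> fc; apply: prob_kernel_integral_le => //; exact: measurable_fst_comp.
Qed.

End next_int.
End bounded_rewards.

Lemma nneseries_le_partial_ub (R : realType) (u : nat -> \bar R) (M : \bar R) :
  (forall n, 0 <= u n)%E -> (forall n, \sum_(0 <= i < n) u i <= M)%E ->
  (\sum_(0 <= i <oo) u i <= M)%E.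
Proof.
move=> u0 uM.
have u0' n : (0 <= n)%N -> xpredT n -> (0 <= u n)%E by move=> _ _; exact: u0.
rewrite (cvg_lim _ (ereal_nondecreasing_cvgn (ereal_nondecreasing_series u0'))) //.
by apply: ge_ereal_sup => _ [n _ <-]; exact: uM.
Qed.

Lemma lee_addr_cvg0 (R : realType) (x y : \bar R) (u : R^nat) :
  u @ \oo --> 0 -> (forall n, x <= y + (u n)%:E)%E -> (x <= y)%E.
Proof.
move=> u0 xyu; apply/lee_addgt0Pr => e e0.
have [N _ /(_ N (leqnn N)) uN] := cvgr0_norm_lt _ u0 _ e0.
apply: le_trans (xyu N) (leeD2l _ _).
by rewrite lee_fin (le_trans (ler_norm _)) ?ltW.
Qed.

Lemma lee_abs_EFinB (R : realType) (x w : R) (y : \bar R) :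
  (`|x%:E - y| <= w%:E)%E -> ((x - w)%:E <= y <= (x + w)%:E)%E.
Proof.
case: y => [r| |] //=; rewrite !lee_fin ler_norml => /andP[? ?].
by apply/andP; split; lra.
Qed.

Section greedy.
Context {T : Type} {R : realType} {m : nat}.
Variable qhat : T -> 'I_m.+1 -> R.

Definition first_argmax s (i : 'I_m.+1) :=
  (qhat s i == qmax qhat s) &&
  [forall j : 'I_m.+1, (j < i)%N ==> (qhat s j != qmax qhat s)].

Lemma qmax_attained s : exists i, qhat s i = qmax qhat s.
Proof.
rewrite /qmax; elim: (index_enum _) => [|a r [i IH]].
  by exists ord0; rewrite big_nil.
rewrite big_cons -IH; have [_|_] := leP (qhat s a) (qhat s i).
  by exists i.
by exists a.
Qed.

Lemma first_argmax_exists s : exists i, first_argmax s i.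
Proof.
have [i0 /eqP i0max] := qmax_attained s.
have [i imax imin] := @arg_minnP _ i0 (fun i => qhat s i == qmax qhat s) val i0max.
exists i; rewrite /first_argmax imax; apply/forallP => j; apply/implyP => ji.
by apply: contraTN ji => /imin; rewrite leqNgt.
Qed.

Lemma first_argmax_unique s i j : first_argmax s i -> first_argmax s j -> i = j.
Proof.
move=> /andP[imax imin] /andP[jmax jmin].
have [ij|ji|/val_inj //] := ltngtP i j.
  by move: (implyP (forallP jmin i) ij); rewrite imax.
by move: (implyP (forallP imin j) ji); rewrite jmax.
Qed.

Lemma greedyP s : first_argmax s (greedy qhat s).
Proof.
rewrite /greedy; case: pickP => [i //|none].
by have [i] := first_argmax_exists s; rewrite /first_argmax none.
Qed.

Lemma greedy_eq s i : (greedy qhat s == i) = first_argmax s i.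
Proof.
apply/eqP/idP => [<-|]; first exact: greedyP.
exact: first_argmax_unique (greedyP s).
Qed.

Lemma greedy_max s : qhat s (greedy qhat s) = qmax qhat s.
Proof. by case/andP: (greedyP s) => /eqP. Qed.

End greedy.

Lemma capi_improves {T : Type} {R : realType} {m : nat}
    (q : T -> 'I_m.+1 -> \bar R) (qhat : T -> 'I_m.+1 -> R)
    (pi : T -> 'I_m.+1) (omega : R) (Sfix : set T) :
  (forall s a, ~ Sfix s -> (`| (qhat s a)%:E - q s a | <= omega%:E)%E) ->
  forall s, (q s (pi s) <= q s (capi qhat pi omega Sfix s))%E.
Proof.
move=> qhat_close s; rewrite /capi; case: ifP => [/andP[/asboolP sfree gap]|_//].
have /andP[_ q_pi] := lee_abs_EFinB (qhat_close s (pi s) sfree).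
have /andP[q_greedy _] := lee_abs_EFinB (qhat_close s (greedy qhat s) sfree).
apply: le_trans q_pi (le_trans _ q_greedy).
by rewrite lee_fin greedy_max ltW.
Qed.

Section capi_measurability.
Context {d : measure_display} {T : measurableType d} {R : realType} {m : nat}.
Variables (qhat : T -> 'I_m.+1 -> R) (pi : T -> 'I_m.+1).
Hypothesis mqhat : forall a, measurable_fun setT (fun s => qhat s a).

Let mqmax : measurable_fun setT (qmax qhat).
Proof. exact: measurable_fun_bigmax. Qed.

Lemma measurable_greedy : measurable_policy (greedy qhat).
Proof.
apply/measurable_policyP => i; under eq_fun do rewrite greedy_eq.
apply: measurable_and; first exact: measurable_fun_eqr.
apply: measurable_fun_forall => j.
case: (j < i)%N => /=; last exact: measurable_cst.
exact/measurable_neg/measurable_fun_eqr.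
Qed.

Lemma measurable_capi omega Sfix : measurable_policy pi -> measurable Sfix ->
  measurable_policy (capi qhat pi omega Sfix).
Proof.
move=> mpi mSfix; apply/measurable_policyP => i; rewrite /capi.
have mpi_eq := iffLR (measurable_policyP _) mpi i.
have mgreedy_eq := iffLR (measurable_policyP _) measurable_greedy i.
set cond := fun s => `[< ~ Sfix s >] && (qhat s (pi s) + omega < qmax qhat s - omega).
have -> : (fun s => (if cond s then greedy qhat s else pi s) == i) =
    (fun s => if cond s then greedy qhat s == i else pi s == i).
  by apply/funext => s; case: ifP.
apply: measurable_fun_ifT => //; apply: measurable_and.
  apply: (measurable_fun_bool true); rewrite setTI.
  have -> : (fun s => `[< ~ Sfix s >]) @^-1` [set true] = ~` Sfix.
    by apply/seteqP; split => s /= /asboolP.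
  exact: measurableC.
apply: (measurable_fun_select
  (F := fun a s => qhat s a + omega < qmax qhat s - omega)) => // a.
by apply: measurable_fun_ltr; [exact: measurable_funD|exact: measurable_funB].
Qed.

End capi_measurability.

Section policy_values.
Context {d : measure_display} {T : measurableType d} {R : realType} {m : nat}.
Variable Q : 'I_m.+1 -> R.-pker T ~> (T * R)%type.
Hypothesis reward01 : forall a s, Q a s [set z | 0 <= z.2 <= 1] = 1%E.
Variable gamma : R.
Hypothesis gamma01 : 0 < gamma < 1.
Local Open Scope ereal_scope.

Let gamma_ge0 : (0 <= gamma)%R.
Proof. by case/andP: gamma01 => /ltW. Qed.

Let gammaX_ge0 t : 0 <= (gamma ^+ t)%:E.
Proof. by rewrite lee_fin exprn_ge0. Qed.

Lemma vpi_qpi pi s : vpi Q gamma pi s = qpi Q gamma pi s (pi s).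
Proof.
by rewrite /vpi /qpi; congr (limn _); apply/funext => n; apply: eq_bigr => -[|t].
Qed.

Section measurable_policy.
Variable pi : T -> 'I_m.+1.
Hypothesis mpi : measurable_policy pi.

Let exp_reward_props t : measurable_fun setT (exp_reward Q pi t) /\
  forall s, 0 <= exp_reward Q pi t s <= 1.
Proof.
elim: t => [|t [IHm IHb]] /=.
  split=> [|s]; last by rewrite mean_reward_ge0 ?mean_reward_le1.
  apply: (measurable_fun_select (F := fun a s => mean_reward Q s a) mpi) => a.
  exact: measurable_mean_reward.
have er0 s : 0 <= exp_reward Q pi t s by case/andP: (IHb s).
split=> [|s].
  apply: (measurable_fun_select
    (F := fun a s => next_int Q s a (exp_reward Q pi t)) mpi) => a.
  exact: measurable_next_int.
by rewrite next_int_ge0 //= next_int_le // => x; case/andP: (IHb x).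
Qed.

Lemma measurable_exp_reward t : measurable_fun setT (exp_reward Q pi t).
Proof. by case: (exp_reward_props t). Qed.

Lemma exp_reward_ge0 t s : 0 <= exp_reward Q pi t s.
Proof. by case: (exp_reward_props t) => _ /(_ s) /andP[]. Qed.

Lemma exp_reward_le1 t s : exp_reward Q pi t s <= 1.
Proof. by case: (exp_reward_props t) => _ /(_ s) /andP[]. Qed.

Let discounted_ge0 t s : 0 <= (gamma ^+ t)%:E * exp_reward Q pi t s.
Proof. exact: mule_ge0 (exp_reward_ge0 _ _). Qed.

Lemma measurable_vpi : measurable_fun setT (vpi Q gamma pi).
Proof.
apply: (@ge0_emeasurable_sum _ _ _ _
  (fun t s => (gamma ^+ t)%:E * exp_reward Q pi t s) xpredT) => [t s _ _|t _].
  exact: discounted_ge0.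
exact/measurable_funeM/measurable_exp_reward.
Qed.

Lemma vpi_ge0 s : 0 <= vpi Q gamma pi s.
Proof. by apply: nneseries_ge0 => t _ _. Qed.

Lemma vpi_le s : vpi Q gamma pi s <= ((1 - gamma)^-1)%:E.
Proof.
apply: nneseries_le_partial_ub => n //.
apply: (@le_trans _ _ (\sum_(0 <= t < n) (gamma ^+ t)%:E)).
  apply: lee_sum => t _; rewrite -[leRHS]mule1.
  exact: lee_wpmul2l (exp_reward_le1 _ _).
have gamma_lt1 : (`|gamma| < 1)%R by case/andP: gamma01 => ? ?; rewrite ger0_norm.
case/andP: gamma01 => gamma_gt0 _.
rewrite sumEFin lee_fin -[((1 - gamma)^-1)%R]mul1r.
apply: le_trans (geometric_le_lim n ler01 gamma_gt0 gamma_lt1).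
by rewrite /series /=; under [leRHS]eq_bigr do rewrite /geometric /= mul1r.
Qed.

Lemma qpi_bellman s a :
  qpi Q gamma pi s a = mean_reward Q s a + gamma%:E * next_int Q s a (vpi Q gamma pi).
Proof.
have next_ge0 t : 0 <= next_int Q s a (exp_reward Q pi t).
  by apply: next_int_ge0 => x; exact: exp_reward_ge0.
have term_ge0 t : 0 <= (gamma ^+ t)%:E * exp_reward_q Q pi t s a.
  apply: mule_ge0 => //; case: t => [|t] /=; first exact: mean_reward_ge0.
  exact: next_ge0.
rewrite /qpi (@nneseries_recl _ xpredT) // expr0 mul1e; congr (_ + _).
rewrite -(nneseries_addn 1) //.
transitivity (gamma%:E *
    \sum_(0 <= t <oo) ((gamma ^+ t)%:E * next_int Q s a (exp_reward Q pi t))).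
  rewrite -nneseriesZl => [|t _]; last exact: mule_ge0.
  by apply: eq_eseriesr => t _; rewrite addn1 /= exprS EFinM muleA.
congr (_ * _); rewrite /next_int /vpi (integral_nneseries (Q a s) measurableT
  (f := fun t z => (gamma ^+ t)%:E * exp_reward Q pi t z.1)).
- apply: eq_eseriesr => t _; rewrite ge0_integralZl_EFin ?exprn_ge0 //.
  + by move=> z _; exact: exp_reward_ge0.
  + exact: measurable_fst_comp (measurable_exp_reward t).
- move=> t; apply/measurable_funeM.
  exact: measurable_fst_comp (measurable_exp_reward t).
- by move=> t z _; exact: discounted_ge0.
Qed.

Let discounted_sum n s := \sum_(0 <= t < n) (gamma ^+ t)%:E * exp_reward Q pi t s.

Let discounted_sum_ge0 n s : 0 <= discounted_sum n s.
Proof. by apply: sume_ge0 => t _; exact: discounted_ge0. Qed.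

Let measurable_discounted_sum n : measurable_fun setT (discounted_sum n).
Proof.
by apply: emeasurable_sum => t; exact/measurable_funeM/measurable_exp_reward.
Qed.

Lemma next_int_discounted_sum n (c : R) s : (0 <= c)%R ->
  next_int Q s (pi s) (fun x => discounted_sum n x + c%:E) =
  \sum_(0 <= t < n) (gamma ^+ t)%:E * exp_reward Q pi t.+1 s + c%:E.
Proof.
move=> c0.
rewrite /next_int ge0_integralD //; last exact: measurable_fst_comp.
rewrite integral_cst // prob_kernel mule1 ge0_integral_sum //; last first.
  move=> t; apply: (measurable_fst_comp
    (f := fun x => (gamma ^+ t)%:E * exp_reward Q pi t x)).
  exact/measurable_funeM/measurable_exp_reward.
congr (_ + _); apply: eq_bigr => t _; rewrite ge0_integralZl_EFin ?exprn_ge0 //.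
- by move=> z _; exact: exp_reward_ge0.
- exact: measurable_fst_comp (measurable_exp_reward t).
Qed.

Lemma le_vpi_of_bellman_subsolution (f : T -> \bar R) (c : R) :
  measurable_fun setT f -> (forall x, 0 <= f x) -> (forall x, f x <= c%:E) ->
  (forall x, f x <= mean_reward Q x (pi x) + gamma%:E * next_int Q x (pi x) f) ->
  forall x, f x <= vpi Q gamma pi x.
Proof.
move=> mf f0 fc fsub.
have truncation n x : f x <= discounted_sum n x + (c * gamma ^+ n)%:E.
  elim: n x => [|n IH] x; first by rewrite /discounted_sum big_geq // add0e mulr1.
  have c0 : (0 <= c)%R by rewrite -lee_fin (le_trans (f0 x)).
  have le_next : next_int Q x (pi x) f <=
      next_int Q x (pi x) (fun z => discounted_sum n z + (c * gamma ^+ n)%:E).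
    apply: ge0_le_integral => //; first exact: measurable_fst_comp.
    apply: (measurable_fst_comp
      (f := fun z => discounted_sum n z + (c * gamma ^+ n)%:E)).
    exact: emeasurable_funD (measurable_discounted_sum n) (measurable_cst _).
  apply: le_trans (fsub x) _.
  rewrite /discounted_sum big_nat_recl // expr0 mul1e -[leRHS]addeA; apply: leeD2l.
  apply: le_trans (lee_wpmul2l (gammaX_ge0 1) le_next) _.
  rewrite expr1 next_int_discounted_sum ?mulr_ge0 ?exprn_ge0 //.
  have shifted_ge0 t : 0 <= (gamma ^+ t)%:E * exp_reward Q pi t.+1 x.
    exact: mule_ge0 (exp_reward_ge0 _ _).
  rewrite ge0_muleDr ?sume_ge0 ?lee_fin ?mulr_ge0 ?exprn_ge0 // ge0_sume_distrr //.
  rewrite -EFinM exprS mulrCA; apply: leeD => //.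
  by apply: lee_sum => t _; rewrite muleA -EFinM -exprS.
have gamma_lt1 : (`|gamma| < 1)%R by case/andP: gamma01 => ? ?; rewrite ger0_norm.
move=> x; apply: (lee_addr_cvg0 (cvg_geometric c gamma_lt1)) => n.
apply: le_trans (truncation n x) _; rewrite leeD2r //.
exact: nneseries_lim_ge.
Qed.

End measurable_policy.
End policy_values.

Theorem lemma3p1 (d : measure_display) (T : measurableType d) (R : realType)
  (m : nat) (Q : 'I_m.+1 -> R.-pker T ~> (T * R)%type) (gamma : R)
  (pi : T -> 'I_m.+1) (qhat : T -> 'I_m.+1 -> R) (omega : R) (Sfix : set T) :
  (forall a s, Q a s [set z | 0 <= z.2 <= 1] = 1%E) ->
  0 < gamma < 1 ->
  (forall a, measurable (pi @^-1` [set a])) ->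
  (forall a, measurable_fun setT (fun s => qhat s a)) ->
  measurable Sfix ->
  0 < omega ->
  (forall s a, ~ Sfix s ->
     (`| (qhat s a)%:E - qpi Q gamma pi s a | <= omega%:E)%E) ->
  forall s, (vpi Q gamma pi s <= vpi Q gamma (capi qhat pi omega Sfix) s)%E.
Proof.
move=> reward01 gamma01 mpi mqhat mSfix _ qhat_close.
have mcapi := measurable_capi mqhat omega mpi mSfix.
apply: (le_vpi_of_bellman_subsolution reward01 gamma01 mcapi
  (measurable_vpi reward01 gamma01 mpi) (vpi_ge0 reward01 gamma01 mpi)
  (vpi_le reward01 gamma01 mpi)) => s.
rewrite vpi_qpi -(qpi_bellman reward01 gamma01 mpi).
exact: capi_improves qhat_close s.
Qed.
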